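(* Let $X\in\mathbb{R}^{n\times n}$ be a matrix all of whose entries are non-zero. Then the appraisal network $G(X)$ satisfies social balance if and only if (S1) $X_{ii}>0$ for every $i\in\{1,\dots,n\}$, and (S3) $\operatorname{sign}(X_{i*})=\pm\operatorname{sign}(X_{j*})$ for all $i,j\in\{1,\dots,n\}$. Moreover, if $G(X)$ satisfies social balance, then $X$ is sign-symmetric, i.e., $\operatorname{sign}(X)=\operatorname{sign}(X)^{\top}$.
   Context: For a matrix $X$, $X_{i*}$ denotes its $i$-th row and $\operatorname{sign}(X)$ is the entry-wise sign ($1$ for positive, $-1$ for negative, $0$ for zero entries). $G(X)$ is the weighted digraph with (possibly negative) adjacency matrix $X$. $G(X)$ satisfies social balance (is structurally balanced) if (S1) $X_{ii}>0$ for all $i$, and (S2) $\operatorname{sign}(X_{ij})\operatorname{sign}(X_{jk})\operatorname{sign}(X_{ki})=1$ for all $i,j,k\in\{1,\dots,n\}$. *)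

From mathcomp Require Import all_boot all_order all_algebra.
Set Implicit Arguments. Unset Strict Implicit. Unset Printing Implicit Defensive.
Import Order.TTheory GRing.Theory Num.Theory.
Local Open Scope ring_scope.

Definition sign_mx (R : realFieldType) (m n : nat) (X : 'M[R]_(m, n)) : 'M[R]_(m, n) :=
  map_mx (fun x => Num.sg x) X.

Definition social_balance (R : realFieldType) (n : nat) (X : 'M[R]_n) : Prop :=
  (forall i : 'I_n, 0 < X i i) /\
  (forall i j k : 'I_n, Num.sg (X i j) * Num.sg (X j k) * Num.sg (X k i) = 1).

Definition rows_sign_pm (R : realFieldType) (n : nat) (X : 'M[R]_n) : Prop :=
  forall i j : 'I_n, exists2 s : R, (s = 1 \/ s = -1) &
    row i (sign_mx X) = s *: row j (sign_mx X).

From mathcomp Require Import all_boot all_order all_algebra.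
Set Implicit Arguments. Unset Strict Implicit. Unset Printing Implicit Defensive.
Import Order.TTheory GRing.Theory Num.Theory.
Local Open Scope ring_scope.

(* With nonzero entries the signs s_ij = sg X_ij are units of square 1, and
   both social balance and (S3) amount, under (S1), to the transitivity law
   s_ik = s_ij s_jk.  For balance this is the triangle (i, j, k) after using
   the degenerate triangle (i, i, k) to get s_ki = s_ik; for (S3) it is the
   k-th entry of row i = c row j, with c = s_ij read off at the diagonal
   entry k = j.  Transitivity with k = i gives s_ij s_ji = s_ii = 1, whence
   sign symmetry. *)

Lemma sqr1_inv_uniq (R : pzRingType) (a b : R) : a * a = 1 -> a * b = 1 -> b = a.
Proof. by move=> aa1 ab1; rewrite -[b]mul1r -aa1 -mulrA ab1 mulr1. Qed.

Lemma sg_sqr1 (R : numDomainType) (x : R) : x != 0 -> Num.sg x * Num.sg x = 1.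
Proof. by move=> x_neq0; rewrite -expr2 sqr_sg x_neq0. Qed.

Lemma sg_pm1 (R : realDomainType) (x : R) :
  x != 0 -> Num.sg x = 1 \/ Num.sg x = -1.
Proof.
by case: ltrgtP => // [x_lt0 | x_gt0] _; [right; rewrite ltr0_sg | left; rewrite gtr0_sg].
Qed.

Definition sign_transitive (R : realFieldType) (n : nat) (X : 'M[R]_n) : Prop :=
  forall i j k : 'I_n, Num.sg (X i k) = Num.sg (X i j) * Num.sg (X j k).

Section SignPattern.

Variables (R : realFieldType) (n : nat) (X : 'M[R]_n).
Hypothesis X_neq0 : forall i j : 'I_n, X i j != 0.

Lemma balance_sign_transitive : social_balance X -> sign_transitive X.
Proof.
move=> [diag_gt0 triX] i j k.
have sg_sym : Num.sg (X k i) = Num.sg (X i k).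
  apply: sqr1_inv_uniq; first exact: sg_sqr1.
  by rewrite -(triX i i k) (gtr0_sg (diag_gt0 i)) mul1r.
apply/esym/sqr1_inv_uniq; first exact: sg_sqr1.
by rewrite -sg_sym mulrC triX.
Qed.

Lemma sign_transitive_rows_sign_pm : sign_transitive X -> rows_sign_pm X.
Proof.
move=> trX i j; exists (Num.sg (X i j)); first exact: sg_pm1.
by apply/rowP=> k; rewrite !mxE (trX i j k).
Qed.

Section PositiveDiagonal.

Hypothesis diag_gt0 : forall i : 'I_n, 0 < X i i.

Let sg_diag i : Num.sg (X i i) = 1.
Proof. exact: gtr0_sg. Qed.

Lemma sign_transitive_sym :
  sign_transitive X -> forall i j, Num.sg (X j i) = Num.sg (X i j).
Proof.
move=> trX i j; apply: sqr1_inv_uniq; first exact: sg_sqr1.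
by rewrite -trX sg_diag.
Qed.

Lemma sign_transitive_balance : sign_transitive X -> social_balance X.
Proof. by move=> trX; split=> // i j k; rewrite -trX -trX sg_diag. Qed.

Lemma rows_sign_pm_transitive : rows_sign_pm X -> sign_transitive X.
Proof.
move=> pmX i j k; have [c _ rowE] := pmX i j.
have sgE m : Num.sg (X i m) = c * Num.sg (X j m).
  by have := congr1 (fun v : 'rV[R]_n => v 0 m) rowE; rewrite !mxE.
by rewrite !sgE sg_diag mulr1.
Qed.

End PositiveDiagonal.

End SignPattern.

Theorem lemma2p2 (R : realFieldType) (n : nat) (X : 'M[R]_n)
  (hX : forall i j : 'I_n, X i j != 0) :
  (social_balance X <-> ((forall i : 'I_n, 0 < X i i) /\ rows_sign_pm X)) /\
  (social_balance X -> sign_mx X = (sign_mx X)^T).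
Proof.
have trX_of_bal := balance_sign_transitive hX.
split; last first.
  move=> balX; have [diag_gt0 _] := balX.
  apply/matrixP=> i j; rewrite !mxE.
  exact: sign_transitive_sym hX diag_gt0 (trX_of_bal balX) j i.
split=> [balX | [diag_gt0 pmX]].
  by split; [case: balX | exact/(sign_transitive_rows_sign_pm hX)/trX_of_bal].
exact/(sign_transitive_balance diag_gt0)/(rows_sign_pm_transitive diag_gt0).
Qed.
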